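(* Let $n\geq 3$, $d\geq 2$ and $\ell\in\textup{int}(C_n)$. The map $\varphi_d:M_d(\ell)\to M_{d+1}(\ell)$ is surjective if and only if $d\geq n-1$.
   Context: $C_n$ is the set of $\ell=(l_1,\ldots,l_n)\in\mathbb{R}^n$ with $l_i>0$ and $l_i\leq\sum_{j\neq i}l_j$ for all $i$; $\textup{int}(C_n)$ is its interior. $V_d(\ell)=\{(\mathbf{v}_1,\ldots,\mathbf{v}_{n-1})\in(\mathbb{R}^d)^{n-1} : \|\mathbf{v}_i-\mathbf{v}_{i-1}\|=l_i,\ i=1,\ldots,n\}$ with $\mathbf{v}_0=\mathbf{v}_n=\mathbf{0}$; $M_d(\ell)=V_d(\ell)/SO(d)$ with $SO(d)$ acting diagonally, $[P]$ the class of $P$. For a fixed linear Euclidean isometry $f_d:\mathbb{R}^d\to\mathbb{R}^{d+1}$, $F_d(\mathbf{v}_1,\ldots,\mathbf{v}_{n-1})=(f_d(\mathbf{v}_1),\ldots,f_d(\mathbf{v}_{n-1}))$ and $\varphi_d([P])=[F_d(P)]$. *)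

From HB Require Import structures.
From mathcomp Require Import all_boot all_order all_algebra.
From mathcomp Require Import all_classical all_reals all_analysis.
Unset Printing Implicit Defensive.
Import Order.TTheory GRing.Theory Num.Theory.
Import numFieldNormedType.Exports.
Local Open Scope classical_set_scope.
Local Open Scope ring_scope.

Section Polygons.
Variable R : realType.

Definition enorm (d : nat) (v : 'rV[R]_d) : R :=
  Num.sqrt (\sum_(j < d) v 0 j ^+ 2).

Definition Cn (n : nat) : set 'rV[R]_n :=
  [set l | forall i : 'I_n, 0 < l 0 i /\ l 0 i <= \sum_(j < n | j != i) l 0 j].

(* A polygon P = (v_1, ..., v_{n-1}), v_k stored as P (k-1). *)
Definition polyg (n d : nat) := 'I_n.-1 -> 'rV[R]_d.

(* vertex v_i for i = 0..n, with v_0 = v_n = 0 *)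
Definition vtx (n d : nat) (P : polyg n d) (i : nat) : 'rV[R]_d :=
  if i is k.+1 then
    (match insub k with Some kk => P kk | None => 0 end)
  else 0.

(* V_d(l): ||v_i - v_{i-1}|| = l_i for i = 1..n  (l_i stored as l 0 (i-1)) *)
Definition Vd (n d : nat) (l : 'rV[R]_n) : set (polyg n d) :=
  [set P | forall i : 'I_n, enorm d (vtx n d P i.+1 - vtx n d P i) = l 0 i].

(* SO(d), acting on row vectors by right multiplication *)
Definition SOd (d : nat) : set 'M[R]_d :=
  [set Q | Q *m Q^T = 1%:M /\ \det Q = 1].

(* [P] = [P'] in M_d(l) = V_d(l)/SO(d) *)
Definition same_class (n d : nat) (P P' : polyg n d) : Prop :=
  exists2 Q, SOd d Q & forall k, P' k = P k *m Q.

Definition Fd (n d : nat) (A : 'M[R]_(d, d.+1)) (P : polyg n d) : polyg n d.+1 :=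
  fun k => P k *m A.

Definition phi_surjective (n d : nat) (l : 'rV[R]_n) (A : 'M[R]_(d, d.+1)) : Prop :=
  forall P' : polyg n d.+1, Vd n d.+1 l P' ->
    exists2 P : polyg n d, Vd n d l P & same_class n d.+1 (Fd n d A P) P'.

End Polygons.

(* If [n - 1 <= d], the [n - 1] vertices of a polygon in [R^(d+1)] lie in a
   hyperplane through the origin; a rotation carries that hyperplane onto the
   image of the isometry [f_d], and pulling back along [f_d] gives a preimage
   under [phi_d].
   Conversely, if [d < n - 1] we build a polygon in [R^(d+1)] whose vertices
   [v_1, ..., v_(d+1)] span [R^(d+1)], so that no rotation moves it into the
   image of [f_d]. It is a fan of triangles [(0, v_k, v_(k+1))]: each new vertex
   leaves the span of the previous ones along a fresh coordinate axis, which
   requires the diagonal lengths [rho_k = |v_k|] to satisfy strict triangle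
   inequalities. The lengths [min (s_k, L - s_k)], with [s_k] the partial
   perimeters, satisfy them weakly, and scaling the inner ones by a factor just
   below [1] makes them strict; this is where [l] being interior is used. *)

From HB Require Import structures.
From mathcomp Require Import all_boot all_order all_algebra.
From mathcomp Require Import all_classical all_reals all_analysis.
From mathcomp Require Import ring lra zify.
Import Order.TTheory GRing.Theory Num.Theory.
Import numFieldNormedType.Exports.
Local Open Scope classical_set_scope.
Local Open Scope ring_scope.

Set Implicit Arguments.
Unset Strict Implicit.
Unset Printing Implicit Defensive.

Section Polygons.
Variable R : realType.

(** * Euclidean geometry of row vectors *)

Definition dot m (u v : 'rV[R]_m) : R := (u *m v^T) 0 0.

Lemma dotE m (u v : 'rV[R]_m) : dot u v = \sum_j u 0 j * v 0 j.
Proof. by rewrite /dot mxE; apply: eq_bigr => j _; rewrite mxE. Qed.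

Lemma dotC m (u v : 'rV[R]_m) : dot u v = dot v u.
Proof. by rewrite !dotE; apply: eq_bigr => j _; rewrite mulrC. Qed.

Lemma dotDl m (u v w : 'rV[R]_m) : dot (u + v) w = dot u w + dot v w.
Proof. by rewrite /dot mulmxDl mxE. Qed.

Lemma dotZl m a (u w : 'rV[R]_m) : dot (a *: u) w = a * dot u w.
Proof. by rewrite /dot -scalemxAl mxE. Qed.

Lemma dotBl m (u v w : 'rV[R]_m) : dot (u - v) w = dot u w - dot v w.
Proof. by rewrite dotDl -scaleN1r dotZl mulN1r. Qed.

Lemma dotDr m (u v w : 'rV[R]_m) : dot w (u + v) = dot w u + dot w v.
Proof. by rewrite dotC dotDl !(dotC w). Qed.

Lemma dotZr m a (u w : 'rV[R]_m) : dot w (a *: u) = a * dot w u.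
Proof. by rewrite dotC dotZl dotC. Qed.

Lemma dotBr m (u v w : 'rV[R]_m) : dot w (u - v) = dot w u - dot w v.
Proof. by rewrite dotC dotBl !(dotC w). Qed.

Lemma dot0l m (w : 'rV[R]_m) : dot 0 w = 0.
Proof. by rewrite /dot mul0mx mxE. Qed.

Lemma dot_ge0 m (u : 'rV[R]_m) : 0 <= dot u u.
Proof. by rewrite dotE; apply: sumr_ge0 => j _; rewrite -expr2 sqr_ge0. Qed.

Lemma dot_eq0 m (u : 'rV[R]_m) : (dot u u == 0) = (u == 0).
Proof.
apply/idP/eqP => [|->]; last by rewrite dot0l.
rewrite dotE psumr_eq0 => [/allP u0|j _]; last by rewrite -expr2 sqr_ge0.
apply/rowP => j; rewrite mxE; apply/eqP.
by have := u0 j (mem_index_enum _); rewrite /= mulf_eq0 orbb.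
Qed.

Lemma dot_delta m (i : 'I_m) (w : 'rV[R]_m) : dot (delta_mx 0 i) w = w 0 i.
Proof. by rewrite /dot -rowE !mxE. Qed.

Lemma dot_mulmx_tr k m (M : 'M[R]_(k, m)) (v : 'rV[R]_k) (u : 'rV[R]_m) :
  dot (v *m M) u = dot v (u *m M^T).
Proof. by rewrite /dot trmx_mul trmxK mulmxA. Qed.

Lemma mulmx_tr_entry k m (M : 'M[R]_(k, m)) (u : 'rV[R]_m) (i : 'I_k) :
  (u *m M^T) 0 i = dot u (row i M).
Proof. by rewrite /dot !mxE; apply: eq_bigr => j _; rewrite !mxE. Qed.

Lemma dot_orthogonal m (G : 'M[R]_m) (u v : 'rV[R]_m) :
  G *m G^T = 1%:M -> dot (u *m G) (v *m G) = dot u v.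
Proof. by move=> GG; rewrite dot_mulmx_tr -mulmxA GG mulmx1. Qed.

Lemma enormE m (u : 'rV[R]_m) : enorm R m u = Num.sqrt (dot u u).
Proof. by rewrite /enorm dotE; congr Num.sqrt; apply: eq_bigr => j _; rewrite expr2. Qed.

Lemma enorm_eq m (u : 'rV[R]_m) x : 0 <= x -> enorm R m u = x <-> dot u u = x ^+ 2.
Proof.
move=> x0; rewrite enormE; split => [<-|->]; first by rewrite sqr_sqrtr // dot_ge0.
by rewrite sqrtr_sqr ger0_norm.
Qed.

Lemma enorm_orthogonal m (G : 'M[R]_m) (u : 'rV[R]_m) :
  G *m G^T = 1%:M -> enorm R m (u *m G) = enorm R m u.
Proof. by move=> GG; rewrite !enormE dot_orthogonal. Qed.

Lemma exists_unit_orthogonal k m (M : 'M[R]_(k, m)) : (k < m)%N ->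
  exists2 z : 'rV[R]_m, dot z z = 1 & z *m M^T = 0.
Proof.
move=> km; have : ~~ (kermx M^T <= (0 : 'M[R]_m))%MS.
  rewrite submx0 -mxrank_eq0 mxrank_ker mxrank_tr -lt0n subn_gt0.
  exact: leq_ltn_trans (rank_leq_row M) km.
case/row_subPn => i; rewrite submx0 -dot_eq0; set z := row i _ => z0.
have zM : z *m M^T = 0 by apply/sub_kermxP; exact: row_sub.
exists ((Num.sqrt (dot z z))^-1 *: z); last by rewrite -scalemxAl zM scaler0.
by rewrite dotZl dotZr mulrA -expr2 exprVn sqr_sqrtr ?dot_ge0 // mulVf.
Qed.

Lemma det_1D_rank1 m (c r : 'rV[R]_m) : \det (1%:M + c^T *m r) = 1 + dot r c.
Proof.
(* Both sides are the determinant of [block_mx 1 c^T (- r) 1], factored two ways. *)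
have E1 : block_mx 1%:M 0 (- r) 1%:M *m block_mx 1%:M c^T 0 (1%:M + r *m c^T)
          = block_mx 1%:M c^T (- r) 1%:M.
  rewrite mulmx_block !mul1mx !mulmx1 ?mul0mx ?mulmx0 ?addr0 ?add0r.
  by rewrite mulNmx addrCA addNr addr0.
have E2 : block_mx (1%:M + c^T *m r) c^T 0 1%:M *m block_mx 1%:M 0 (- r) 1%:M
          = block_mx 1%:M c^T (- r) 1%:M.
  rewrite mulmx_block !mul1mx !mulmx1 ?mul0mx ?mulmx0 ?addr0 ?add0r.
  by rewrite mulmxN addrK.
have := congr1 determinant E1; rewrite -E2 !det_mulmx det_lblock !det_ublock.
rewrite !det1 !mul1r !mulr1 => <-.
by rewrite det_mx11 [LHS]mxE mxE eqxx.
Qed.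

Definition reflection m (v : 'rV[R]_m) : 'M[R]_m :=
  1%:M - (2 / dot v v) *: (v^T *m v).

Lemma reflectionE m (v w : 'rV[R]_m) :
  w *m reflection v = w - (2 / dot v v * dot w v) *: v.
Proof.
rewrite mulmxBr mulmx1 -scalemxAr mulmxA (mx11_scalar (w *m v^T)) mul_scalar_mx.
by rewrite scalerA.
Qed.

Lemma tr_reflection m (v : 'rV[R]_m) : (reflection v)^T = reflection v.
Proof. by rewrite /reflection linearD /= linearN /= linearZ /= trmx_mul trmxK trmx1. Qed.

Lemma reflectionK m (v : 'rV[R]_m) : v != 0 -> reflection v *m reflection v = 1%:M.
Proof.
rewrite -dot_eq0 => v0; apply/row_matrixP => i.
rewrite row_mul row1 rowE !reflectionE dotBl dotZl -addrA -opprD -scalerDl.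
by rewrite [X in X *: v](_ : _ = 0) ?scale0r ?subr0 //; field.
Qed.

Lemma det_reflection m (v : 'rV[R]_m) : v != 0 -> \det (reflection v) = -1.
Proof.
rewrite -dot_eq0 => v0.
have -> : reflection v = 1%:M + (- (2 / dot v v) *: v)^T *m v.
  by rewrite /reflection [in RHS]linearZ /= -scalemxAl scaleNr.
by rewrite det_1D_rank1 dotZr; field.
Qed.

Lemma SOd_reflectionM m (v z : 'rV[R]_m) : v != 0 -> z != 0 ->
  SOd R m (reflection v *m reflection z).
Proof.
move=> v0 z0; split; last by rewrite det_mulmx !det_reflection // mulrNN mulr1.
rewrite trmx_mul !tr_reflection mulmxA -(mulmxA _ _ (reflection z)).
by rewrite reflectionK // mulmx1 reflectionK.
Qed.

Lemma SOd_tr m (G : 'M[R]_m) : SOd R m G -> SOd R m G^T.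
Proof. by case=> GG dG; split; rewrite ?det_tr // trmxK mulmx1C. Qed.

Lemma exists_rotation m (w u : 'rV[R]_m) : (1 < m)%N ->
  dot w w = 1 -> dot u u = 1 -> exists2 G, SOd R m G & w *m G = u.
Proof.
move=> m1 ww uu; have [<-|wu] := eqVneq w u.
  by exists 1%:M; rewrite ?mulmx1 //; split; rewrite ?trmx1 ?mulmx1 ?det1.
have [z zz zu] := exists_unit_orthogonal u m1.
have z0 : z != 0 by rewrite -dot_eq0 zz oner_eq0.
have wu0 : w - u != 0 by rewrite subr_eq0.
(* The first reflection swaps [w] and [u], the second one fixes [u] and
   restores the orientation. *)
exists (reflection (w - u) *m reflection z); first exact: SOd_reflectionM.
have wwu : 0 < dot (w - u) (w - u) by rewrite lt_def dot_eq0 wu0 dot_ge0.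
have uz : dot u z = 0 by rewrite dotC /dot zu mxE.
rewrite mulmxA; have -> : w *m reflection (w - u) = u.
  rewrite reflectionE [_ / _ * _](_ : _ = 1); first by rewrite scale1r opprB addrC subrK.
  by move: wwu; rewrite !dotBl !dotBr ww uu (dotC u w) => ?; field; lra.
by rewrite reflectionE uz mulr0 scale0r subr0.
Qed.

Lemma isometry_mulmx_tr d e (A : 'M[R]_(d, e)) :
  (forall v, enorm R e (v *m A) = enorm R d v) -> A *m A^T = 1%:M.
Proof.
move=> isoA; have dotA v : dot (v *m A) (v *m A) = dot v v.
  by have := congr1 (fun x => x ^+ 2) (isoA v); rewrite !enormE !sqr_sqrtr ?dot_ge0.
have polarA x y : dot (x *m A) (y *m A) = dot x y.
  have := dotA (x + y); rewrite mulmxDl !dotDl !dotDr !dotA.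
  by rewrite (dotC (y *m A)) (dotC y); lra.
apply/matrixP => i j; have := polarA (delta_mx 0 j) (delta_mx 0 i).
rewrite dot_mulmx_tr dot_delta -mulmxA -rowE dot_delta !mxE => ->.
by rewrite eq_sym.
Qed.

Lemma mulmx_tr_add_normal d (A : 'M[R]_(d, d.+1)) (u : 'rV[R]_d.+1) :
  A *m A^T = 1%:M -> u *m A^T = 0 -> dot u u = 1 -> A^T *m A + u^T *m u = 1%:M.
Proof.
move=> AA uA uu.
have BB : col_mx u A *m (col_mx u A)^T = 1%:M :> 'M[R]_(1 + d).
  have Au : A *m u^T = 0 by rewrite -(trmxK A) -trmx_mul uA trmx0.
  rewrite tr_col_mx mul_col_row AA uA Au.
  by rewrite (mx11_scalar (u *m u^T)) -/(dot u u) uu -scalar_mx_block.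
by have := mulmx1C BB; rewrite tr_col_mx mul_row_col addrC.
Qed.

Lemma normal_complement_fix d (A : 'M[R]_(d, d.+1)) (u z : 'rV[R]_d.+1) :
  A *m A^T = 1%:M -> u *m A^T = 0 -> dot u u = 1 -> dot z u = 0 ->
  z *m A^T *m A = z.
Proof.
move=> AA uA uu zu; have := congr1 (mulmx z) (mulmx_tr_add_normal AA uA uu).
rewrite mulmx1 mulmxDr !mulmxA (mx11_scalar (z *m u^T)) -/(dot z u) zu.
by rewrite mul_scalar_mx scale0r addr0.
Qed.

(** * Surjectivity in high dimension *)

Lemma vtx_mulmx n d e (P : polyg R n d) (M : 'M[R]_(d, e)) j :
  vtx R n e (fun k => P k *m M) j = vtx R n d P j *m M.
Proof. by case: j => [|k] /=; [|case: insub => //]; rewrite mul0mx. Qed.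

Lemma vtx_orthogonal n d (P : polyg R n d) (w : 'rV[R]_d) :
  (forall k, dot (P k) w = 0) -> forall j, dot (vtx R n d P j) w = 0.
Proof. by move=> Pw [|k] /=; [|case: insub => //]; rewrite dot0l. Qed.

Lemma phi_surjective_high_dim n d (l : 'rV[R]_n) (A : 'M[R]_(d, d.+1)) :
  (0 < d)%N -> (n.-1 <= d)%N -> (forall v, enorm R d.+1 (v *m A) = enorm R d v) ->
  phi_surjective R n d l A.
Proof.
move=> d0 nd isoA P' P'l; have AA := isometry_mulmx_tr isoA.
have [u uu uA] := exists_unit_orthogonal A (ltnSn d).
have [w ww wP'] := exists_unit_orthogonal (\matrix_k P' k) (leq_ltn_trans nd (ltnSn d)).
have P'w k : dot (P' k) w = 0.
  by rewrite dotC -(rowK (fun k => P' k) k) -mulmx_tr_entry wP' mxE.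
have [G SOG wG] := exists_rotation (d0 : (1 < d.+1)%N) ww uu; have [GG _] := SOG.
have liftG x : dot x w = 0 -> x *m G *m A^T *m A = x *m G.
  by move=> xw; apply: (normal_complement_fix AA uA uu); rewrite -wG dot_orthogonal.
exists (fun k => P' k *m (G *m A^T)).
  move=> i; rewrite !vtx_mulmx -mulmxBl -isoA mulmxA liftG ?enorm_orthogonal //.
  by rewrite dotBl !(vtx_orthogonal P'w) subrr.
exists G^T; first exact: SOd_tr.
by move=> k; rewrite /Fd mulmxA liftG // -mulmxA GG mulmx1.
Qed.

(** * Polygons spanning the whole space *)

Definition strict_triangle (a b c : R) : Prop := [/\ a - b < c, b - a < c & c < a + b].

Lemma strict_triangleC a b c : strict_triangle a b c -> strict_triangle b a c.
Proof. by case=> *; split; lra. Qed.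

Lemma strict_triangle_scale lam a b c : 0 < lam < 1 -> 0 < c ->
  a - b <= c -> b - a <= c -> c < lam * (a + b) ->
  strict_triangle (lam * a) (lam * b) c.
Proof.
move=> /andP[lam0 lam1] c0 abc bac cab.
have lamc : lam * c < c by rewrite gtr_pMl.
by split; [move: abc | move: bac | lra]; rewrite -(ler_pM2l lam0) mulrBr; lra.
Qed.

Lemma strict_triangle_scaler lam a b c : 0 < lam < 1 -> 0 < a -> 0 < b ->
  b - a <= c -> c < lam * (a + b) -> a - c < lam * b ->
  strict_triangle a (lam * b) c.
Proof.
move=> /andP[lam0 lam1] a0 b0 bac cab acb.
have lamb : lam * b < b by rewrite gtr_pMl.
have lama : lam * a < a by rewrite gtr_pMl.
by split; [lra | lra | move: cab; rewrite mulrDr; lra].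
Qed.

Lemma exists_apex m (v f : 'rV[R]_m) (a b c : R) :
  dot v v = a ^+ 2 -> dot f f = 1 -> dot v f = 0 -> strict_triangle a b c ->
  exists alpha beta, [/\ 0 < beta,
    dot (alpha *: v + beta *: f) (alpha *: v + beta *: f) = b ^+ 2 &
    dot (alpha *: v + beta *: f - v) (alpha *: v + beta *: f - v) = c ^+ 2].
Proof.
move=> vv ff vf [abc bac cab].
have a0 : 0 < a by lra.
pose alpha := (a ^+ 2 + b ^+ 2 - c ^+ 2) / (2 * a ^+ 2).
(* Heron: [4 a^2 (b^2 - alpha^2 a^2)] factors into the four triangle terms. *)
have height2 : b ^+ 2 - alpha ^+ 2 * a ^+ 2 =
    (c - a + b) * (c + a - b) * ((a + b - c) * (a + b + c)) / (4 * a ^+ 2).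
  by rewrite /alpha; field; lra.
have h0 : 0 < b ^+ 2 - alpha ^+ 2 * a ^+ 2.
  rewrite height2; apply: divr_gt0; last by nra.
  by apply: mulr_gt0; apply: mulr_gt0; lra.
pose beta := Num.sqrt (b ^+ 2 - alpha ^+ 2 * a ^+ 2).
have beta2 : beta ^+ 2 = b ^+ 2 - alpha ^+ 2 * a ^+ 2 by rewrite sqr_sqrtr // ltW.
have dot_comb x :
    dot (x *: v + beta *: f) (x *: v + beta *: f) = x ^+ 2 * a ^+ 2 + beta ^+ 2.
  by rewrite !dotDl !dotDr !dotZl !dotZr (dotC f v) vv ff vf; ring.
exists alpha, beta; split; first by rewrite sqrtr_gt0.
  by rewrite dot_comb beta2; ring.
have -> : alpha *: v + beta *: f - v = (alpha - 1) *: v + beta *: f.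
  by rewrite scalerBl scale1r addrAC.
by rewrite dot_comb beta2 /alpha; field; lra.
Qed.

Section Fan.
Variables (m : nat) (rho l : nat -> R).

(* The last two clauses say that the first [m] vectors form a lower triangular
   matrix with nonzero diagonal. *)
Definition fan K (v : nat -> 'rV[R]_m) : Prop :=
  [/\ forall k, (0 < k <= K)%N -> dot (v k) (v k) = rho k ^+ 2,
      forall k, (0 < k < K)%N -> dot (v k.+1 - v k) (v k.+1 - v k) = l k ^+ 2,
      forall k (j : 'I_m), (0 < k <= K)%N -> (k <= j)%N -> v k 0 j = 0 &
      forall k (j : 'I_m), (0 < k <= K)%N -> j.+1 = k -> v k 0 j != 0].

Lemma exists_fan1 : 0 < rho 1 -> (0 < m)%N -> exists v, fan 1 v.
Proof.
move=> rho1 m0; exists (fun _ => rho 1 *: delta_mx 0 (Ordinal m0)).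
split=> [k k1 | k k1 | k j k1 kj | k j k1 jk]; rewrite ?mxE.
- have -> : k = 1%N by lia.
  by rewrite dotZl dotZr dot_delta mxE eqxx mulr1 expr2.
- lia.
- have -> : (j == Ordinal m0) = false by apply/eqP => /(congr1 val) /=; lia.
  by rewrite andbF mulr0.
- have -> : j = Ordinal m0 by apply: val_inj => /=; lia.
  by rewrite !eqxx mulr1 gt_eqF.
Qed.

Lemma fan_step K v : (1 < m)%N -> (0 < K)%N ->
  strict_triangle (rho K) (rho K.+1) (l K) -> fan K v -> exists v', fan K.+1 v'.
Proof.
move=> m1 K0 tri [vv vdiff vzero vdiag].
have KK : (0 < K <= K)%N by rewrite K0 leqnn.
have [f [ff vf fK]] : exists f, [/\ dot f f = 1, dot (v K) f = 0 &
    forall j : 'I_m, (K < m)%N -> f 0 j = (j == K :> nat)%:R].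
  have [Km|mK] := ltnP K m.
    exists (delta_mx 0 (Ordinal Km)); split; last by move=> j _; rewrite mxE.
      by rewrite dot_delta mxE !eqxx.
    by rewrite dotC dot_delta vzero.
  have [z zz zv] := exists_unit_orthogonal (v K) m1.
  by exists z; split => //; rewrite dotC /dot zv mxE.
have [alpha [beta [beta0 ww wv]]] := exists_apex (vv K KK) ff vf tri.
exists (fun k => if k == K.+1 then alpha *: v K + beta *: f else v k).
split=> [k | k | k j | k j]; have [->|kK] := eqVneq k K.+1; rewrite ?eqxx ?(negbTE kK).
- by [].
- by move=> k1; apply: vv; lia.
- lia.
- rewrite eqSS; have [->|kK'] := eqVneq k K; first by [].
  by move=> k1; apply: vdiff; lia.
- move=> _ Kj; rewrite !mxE (vzero K j KK (ltnW Kj)) fK ?(ltn_trans Kj) //.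
  by rewrite (gtn_eqF Kj) !mulr0 addr0.
- by move=> k1; apply: vzero; lia.
- move=> _ [jK]; have Km : (K < m)%N by rewrite -jK.
  by rewrite !mxE (vzero K j KK) ?jK // fK // jK eqxx mulr0 add0r mulr1 gt_eqF.
- by move=> k1; apply: vdiag; lia.
Qed.

Lemma exists_fan n : (1 < m)%N -> 0 < rho 1 ->
  (forall k, (0 < k)%N -> (k.+1 < n)%N -> strict_triangle (rho k) (rho k.+1) (l k)) ->
  forall K, (0 < K < n)%N -> exists v, fan K v.
Proof.
move=> m1 rho1 tri; elim=> [//|K IH KS].
have [->|K0] := posnP K; first exact: exists_fan1 rho1 (ltnW m1).
have [v fv] := IH ltac:(lia).
exact: fan_step m1 K0 (tri _ K0 ltac:(lia)) fv.
Qed.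

Lemma fan_span K v : (m <= K)%N -> fan K v ->
  forall y, (forall i : 'I_m, dot (v i.+1) y = 0) -> y = 0.
Proof.
move=> mK [_ _ vzero vdiag] y yv; pose V := \matrix_(i < m) v i.+1.
have iK (i : 'I_m) : (0 < i.+1 <= K)%N by rewrite /= (leq_trans (ltn_ord i)).
have trigV : is_trig_mx V by apply/is_trig_mxP => i j ij; rewrite mxE vzero.
have freeVT : row_free V^T.
  rewrite row_free_unit unitmx_tr unitmxE unitfE det_trig //.
  by apply/prodf_neq0 => i _; rewrite mxE vdiag.
apply/eqP; rewrite -(mulmx_free_eq0 _ freeVT); apply/eqP/rowP => i.
by rewrite mulmx_tr_entry rowK dotC yv mxE.
Qed.

Lemma exists_spanning_loop n : (1 < m)%N -> (m < n)%N ->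
  rho 1 = l 0 -> rho n.-1 = l n.-1 ->
  (forall k, (0 < k)%N -> (k.+1 < n)%N -> strict_triangle (rho k) (rho k.+1) (l k)) ->
  exists v : nat -> 'rV[R]_m, [/\ v 0 = 0, v n = 0,
    forall k, (k < n)%N -> dot (v k.+1 - v k) (v k.+1 - v k) = l k ^+ 2 &
    forall y, (forall i : 'I_m, dot (v i.+1) y = 0) -> y = 0].
Proof.
move=> m1 mn rho1l rhonl tri.
have rho1 : 0 < rho 1 by have [] := tri 1%N isT ltac:(lia); lra.
have [v fv] := exists_fan m1 rho1 tri (ltac:(lia) : (0 < n.-1 < n)%N).
have [vv vdiff _ _] := fv.
exists (fun k => if (0 < k < n)%N then v k else 0); split => [|||y yv].
- by [].
- by rewrite ltnn andbF.
- move=> k kn; have [->|k0] := posnP k.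
    by rewrite /= (ltn_trans m1 mn) subr0 vv ?rho1l //; lia.
  have [kn'|kn'] := eqVneq k.+1 n.
    rewrite kn' ltnn andbF leqnn sub0r -scaleN1r dotZl dotZr !mulN1r opprK.
    by rewrite (_ : k = n.-1) ?vv ?rhonl //; lia.
  by rewrite kn /= (_ : k.+1 < n)%N ?vdiff //; lia.
- have mn1 : (m <= n.-1)%N by lia.
  apply: (fan_span mn1 fv) => i.
  by have := yv i; rewrite /= (leq_ltn_trans (ltn_ord i) mn).
Qed.

End Fan.

Lemma exists_scale_above (s : seq R) : {in s, forall x, x < 1} ->
  exists2 lam, 0 < lam < 1 & {in s, forall x, x < lam}.
Proof.
elim: s => [_|x s IH lt1]; first by exists (1 / 2) => //; apply/andP; split; lra.
have [lam /andP[lam0 lam1] lt_lam] : exists2 lam, 0 < lam < 1 & {in s, forall x, x < lam}.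
  by apply: IH => y ys; apply: lt1; rewrite inE ys orbT.
have x1 : x < 1 by apply: lt1; rewrite mem_head.
exists (Num.max lam ((1 + x) / 2)).
  by rewrite lt_max lam0 gt_max lam1 /=; lra.
move=> y; rewrite inE => /predU1P[->|ys]; rewrite lt_max; apply/orP; [right; lra|left].
exact: lt_lam.
Qed.

Definition arc_dist (L x : R) : R := Num.min x (L - x).

Lemma arc_dist_sym L x : arc_dist L (L - x) = arc_dist L x.
Proof. by rewrite /arc_dist minC (_ : L - (L - x) = x) //; ring. Qed.

Lemma arc_dist_id L x : 2 * x <= L -> arc_dist L x = x.
Proof. by move=> x2; rewrite /arc_dist; case: (leP x (L - x)) => //; lra. Qed.

Lemma arc_dist_gt0 L x : 0 < x -> x < L -> 0 < arc_dist L x.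
Proof. by move=> x0 xL; rewrite /arc_dist; case: (leP x (L - x)); lra. Qed.

Lemma arc_dist_lipschitz L x h : 0 <= h ->
  arc_dist L (x + h) - arc_dist L x <= h /\ arc_dist L x - arc_dist L (x + h) <= h.
Proof.
move=> h0; rewrite /arc_dist.
by case: (leP x (L - x)); case: (leP (x + h) (L - (x + h))); split; lra.
Qed.

Lemma arc_dist_add L x h : 0 < h -> 0 < x -> x + h < L -> 2 * h < L ->
  h < arc_dist L x + arc_dist L (x + h).
Proof.
move=> *; rewrite /arc_dist.
by case: (leP x (L - x)); case: (leP (x + h) (L - (x + h))); lra.
Qed.

Lemma arc_dist_sub L a h : 0 < h -> 2 * a < L -> a - h < arc_dist L (a + h).
Proof. by move=> *; rewrite /arc_dist; case: (leP (a + h) (L - (a + h))); lra. Qed.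

Section Diagonals.
Variables (n : nat) (l : nat -> R).
Hypothesis n_gt3 : (3 < n)%N.
Hypothesis l_gt0 : forall k, (k < n)%N -> 0 < l k.
Hypothesis l_lt_half : forall k, (k < n)%N -> 2 * l k < \sum_(0 <= j < n) l j.

(* [arc k] is the position of the [k]-th vertex along the boundary, and [g k]
   the length of the shorter boundary path from it back to the origin. *)
Let arc k := \sum_(0 <= j < k) l j.
Let g k := arc_dist (arc n) (arc k).

Let arcS k : arc k.+1 = arc k + l k.
Proof. by rewrite /arc big_nat_recr. Qed.

Let arc0 : arc 0 = 0.
Proof. by rewrite /arc big_geq. Qed.

Let arc_lt i j : (i < j <= n)%N -> arc i < arc j.
Proof.
elim: j => [|j IH] /andP[ij jn]; first by [].
rewrite arcS; have lj := l_gt0 jn.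
have [->|ij'] := eqVneq i j; first lra.
by have := IH ltac:(lia); lra.
Qed.

Let g1 : g 1 = l 0.
Proof.
rewrite /g arcS arc0 add0r arc_dist_id //.
by apply/ltW/l_lt_half; lia.
Qed.

Let arc_pred : arc n.-1 = arc n - l n.-1.
Proof. by rewrite -{2}(prednK (ltnW (ltnW (ltnW n_gt3)))) arcS addrK. Qed.

Let gn : g n.-1 = l n.-1.
Proof.
rewrite /g arc_pred arc_dist_sym arc_dist_id //.
by apply/ltW/l_lt_half; lia.
Qed.

Let g_gt0 k : (0 < k < n)%N -> 0 < g k.
Proof.
move=> /andP[k0 kn]; apply: arc_dist_gt0; first by rewrite -arc0 arc_lt //; lia.
by apply: arc_lt; rewrite kn leqnn.
Qed.

Let g_lipschitz k : (k < n)%N -> g k.+1 - g k <= l k /\ g k - g k.+1 <= l k.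
Proof. by move=> kn; rewrite /g arcS; apply/arc_dist_lipschitz/ltW/l_gt0. Qed.

Let g_triangle k : (0 < k)%N -> (k.+1 < n)%N -> l k < g k + g k.+1.
Proof.
move=> k0 kn; rewrite /g arcS; apply: arc_dist_add.
- by apply: l_gt0; lia.
- by rewrite -arc0 arc_lt //; lia.
- by rewrite -arcS arc_lt //; lia.
- by apply: l_lt_half; lia.
Qed.

Let g1_sub : g 1 - l 1 < g 2.
Proof.
rewrite g1 /g !arcS arc0 add0r.
by apply: arc_dist_sub; [apply: l_gt0 | apply: l_lt_half]; lia.
Qed.

Let g_pred_sub : g n.-1 - l n.-2 < g n.-2.
Proof.
have arcE : arc n.-1 = arc n.-2 + l n.-2 by rewrite -arcS; congr arc; lia.
rewrite gn /g (_ : arc n.-2 = arc n - (l n.-1 + l n.-2)); last first.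
  by move: arcE; rewrite arc_pred; lra.
by rewrite arc_dist_sym; apply: arc_dist_sub; [apply: l_gt0 | apply: l_lt_half]; lia.
Qed.

Let exists_scale : exists2 lam, 0 < lam < 1 &
  [/\ forall k, (0 < k)%N -> (k.+1 < n)%N -> l k < lam * (g k + g k.+1),
      g 1 - l 1 < lam * g 2 &
      forall k, k.+2 = n -> g k.+1 - l k < lam * g k].
Proof.
have g2 : 0 < g 2 by apply: g_gt0; lia.
have gn2 : 0 < g n.-2 by apply: g_gt0; lia.
have gg k : (0 < k)%N -> (k.+1 < n)%N -> 0 < g k + g k.+1.
  by move=> k0 kn; apply: addr_gt0; apply: g_gt0; lia.
pose s := [:: (g 1 - l 1) / g 2, (g n.-1 - l n.-2) / g n.-2
            & [seq l k / (g k + g k.+1) | k <- iota 1 n.-2]].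
have [lam lam01 lt_lam] : exists2 lam, 0 < lam < 1 & {in s, forall x, x < lam}.
  apply: exists_scale_above => x; rewrite !inE => /or3P[/eqP->|/eqP->|/mapP[k]].
  - by rewrite ltr_pdivrMr // mul1r g1_sub.
  - by rewrite ltr_pdivrMr // mul1r g_pred_sub.
  - rewrite mem_iota => k1 ->; rewrite ltr_pdivrMr ?mul1r ?g_triangle ?gg //; lia.
exists lam => //; split => [k k0 kn||k kn].
- rewrite -ltr_pdivrMr ?gg //; apply: lt_lam; rewrite !inE; apply/or3P/Or33.
  by apply/mapP; exists k; rewrite ?mem_iota //; lia.
- by rewrite -ltr_pdivrMr //; apply: lt_lam; rewrite !inE eqxx.
- have -> : k = n.-2 by lia.
  rewrite (_ : n.-2.+1 = n.-1); last lia.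
  by rewrite -ltr_pdivrMr //; apply: lt_lam; rewrite !inE eqxx orbT.
Qed.

Lemma exists_diagonals : exists rho : nat -> R, [/\ rho 1 = l 0, rho n.-1 = l n.-1 &
  forall k, (0 < k)%N -> (k.+1 < n)%N -> strict_triangle (rho k) (rho k.+1) (l k)].
Proof.
have [lam lam01 [lam_tri lam_1 lam_pred]] := exists_scale.
exists (fun k => if (k == 1) || (k == n.-1) then g k else lam * g k); split.
- by rewrite eqxx g1.
- by rewrite eqxx orbT gn.
move=> k k0 kn; have [lip1 lip2] := g_lipschitz (ltnW kn).
have gk : 0 < g k by apply: g_gt0; lia.
have gk1 : 0 < g k.+1 by apply: g_gt0; lia.
have lk := l_gt0 (ltnW kn).
have [k1|k1] := eqVneq k 1.
  subst k; rewrite (_ : 2 == n.-1 = false) /=; last by apply/negbTE; lia.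
  by apply: strict_triangle_scaler => //; apply: lam_tri.
rewrite eqSS (_ : k == 0 = false) /=; last by apply/negbTE; lia.
have [kn1|kn1] := eqVneq k.+1 n.-1.
  rewrite (_ : k == n.-1 = false) /=; last by apply/negbTE; lia.
  apply/strict_triangleC/strict_triangle_scaler => //; first by rewrite addrC lam_tri.
  by apply: lam_pred; lia.
rewrite (_ : k == n.-1 = false) /=; last by apply/negbTE; lia.
by apply: strict_triangle_scale => //; apply: lam_tri.
Qed.

End Diagonals.

Lemma interior_Cn_lt n (l : 'rV[R]_n) : interior (Cn R n) l ->
  forall i, 0 < l 0 i /\ 2 * l 0 i < \sum_j l 0 j.
Proof.
move=> /nbhs_ballP[e /= e0 lball] i.
have Cn_near (y : 'rV[R]_n) : (forall i j, `|l i j - y i j| < e) -> Cn R n y.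
  by move=> ly; apply: lball; split.
have [l0 _] := Cn_near l (fun a b => ltac:(by rewrite subrr normr0)) i.
(* Lengthening the [i]-th side by [e / 2] keeps [l] inside [Cn]. *)
pose y := l + (e / 2) *: delta_mx 0 i.
have [_ yi] : 0 < y 0 i /\ y 0 i <= \sum_(j < n | j != i) y 0 j.
  apply: Cn_near => a b; rewrite !mxE opprD addrA subrr sub0r normrN.
  by case: (_ && _); rewrite ?mulr1 ?mulr0 ?normr0 ?ger0_norm //; lra.
have sum_y : \sum_(j < n | j != i) y 0 j = \sum_(j < n | j != i) l 0 j.
  by apply: eq_bigr => j ji; rewrite !mxE (negbTE ji) andbF mulr0 addr0.
move: yi; rewrite sum_y !mxE !eqxx mulr1 => yi.
by split => //; rewrite (bigD1 i) //=; lra.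
Qed.

Lemma vtx_loop n d (v : nat -> 'rV[R]_d) : v 0 = 0 -> v n = 0 ->
  forall j, (j <= n)%N -> vtx R n d (fun k : 'I_n.-1 => v k.+1) j = v j.
Proof.
move=> v0 vn [|k] kn /=; first by rewrite v0.
case: insubP => [kk _ -> //|]; rewrite -leqNgt => nk.
by rewrite (_ : k.+1 = n) //; lia.
Qed.

Lemma phi_not_surjective_low_dim n d (l : 'rV[R]_n) (A : 'M[R]_(d, d.+1)) :
  (2 <= d)%N -> (d.+1 < n)%N -> interior (Cn R n) l -> ~ phi_surjective R n d l A.
Proof.
move=> d2 dn lint surj.
(* [lk] reads the side lengths with a natural-number index, [0] out of range. *)
pose lk k := if insub k is Some i then l 0 i else 0.
have lkE (i : 'I_n) : lk i = l 0 i by rewrite /lk valK.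
have l_lt := interior_Cn_lt lint.
have l_gt0 k : (k < n)%N -> 0 < lk k.
  by move=> kn; rewrite (lkE (Ordinal kn)); case: (l_lt (Ordinal kn)).
have l_lt_half k : (k < n)%N -> 2 * lk k < \sum_(0 <= j < n) lk j.
  move=> kn; rewrite big_mkord (eq_bigr _ (fun j _ => lkE j)) (lkE (Ordinal kn)).
  by case: (l_lt (Ordinal kn)).
have [rho [rho1 rhon tri]] := exists_diagonals (ltac:(lia) : (3 < n)%N) l_gt0 l_lt_half.
have [v [v0 vn vdiff vspan]] :=
  exists_spanning_loop (ltac:(lia) : (1 < d.+1)%N) dn rho1 rhon tri.
pose P' : polyg R n d.+1 := fun k => v k.+1.
have P'l : Vd R n d.+1 l P'.
  move=> i; rewrite (vtx_loop v0 vn (ltn_ord i)) (vtx_loop v0 vn (ltnW (ltn_ord i))).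
  by rewrite enorm_eq ?vdiff ?lkE //; case: (l_lt i) => /ltW.
have [P _ [Q [QQ _] P'Q]] := surj P' P'l.
have [u uu uA] := exists_unit_orthogonal A (ltnSn d).
have uQ : u *m Q = 0.
  apply: vspan => i; have i_lt : (i < n.-1)%N by have := ltn_ord i; lia.
  have := P'Q (Ordinal i_lt); rewrite /P' /= => ->.
  by rewrite /Fd dot_orthogonal // dot_mulmx_tr uA dotC dot0l.
have := uu; rewrite -(mulmx1 u) -QQ mulmxA uQ !mul0mx dot0l => /eqP.
by rewrite eq_sym oner_eq0.
Qed.

End Polygons.

Theorem proposition5p1 (R : realType) (n d : nat) (l : 'rV[R]_n)
  (A : 'M[R]_(d, d.+1)) :
  (3 <= n)%N -> (2 <= d)%N ->
  (interior (@Cn R n)) l ->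
  (forall v : 'rV[R]_d, enorm R d.+1 (v *m A) = enorm R d v) ->
  (phi_surjective R n d l A <-> (n.-1 <= d)%N).
Proof.
move=> _ d2 lint isoA; split => [surj|nd].
  rewrite leqNgt; apply/negP => dn.
  exact: (phi_not_surjective_low_dim d2 (ltac:(lia) : (d.+1 < n)%N) lint surj).
exact: phi_surjective_high_dim (ltnW d2) nd isoA.
Qed.
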